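(* For every $x\in(0,\infty)$ and $k\in\mathbb{Z}$, $\mathcal{S}_k\big(a^{\rm st}(x),b^{\rm st}(x),m^{\rm st}(x),n^{\rm st}(x)\big)=\big(a^{\rm st}(s_k(x)),b^{\rm st}(s_k(x)),m^{\rm st}(s_k(x)),n^{\rm st}(s_k(x))\big)$.
   Context: ABMN system on $\mathbb{Z}$: $a_i,b_i\ge0$, $m_i,n_i\in\mathbb{R}$ with $(a_i+b_i)(m_i+a_i)=a_im_{i+1}+b_im_{i-1}$, $(a_i+b_i)(n_i+b_i)=a_in_{i+1}+b_in_{i-1}$, $(a_i+b_i)^2=b_i(m_{i+1}-m_{i-1})$, $(a_i+b_i)^2=a_i(n_{i-1}-n_{i+1})$ for all $i$; positive if all $a_i,b_i>0$. A positive solution is standard if $\lim_{i\to-\infty}m_i=0$, $\lim_{i\to\infty}n_i=0$, $\lim_{i\to\infty}m_i=1$; for $x>0$, $(a^{\rm st}(x),b^{\rm st}(x),m^{\rm st}(x),n^{\rm st}(x))$ is the unique standard solution with central ratio $\frac{n_{-1}-n_0}{m_0-m_{-1}}=x$. $\mathcal{S}_k$ is the left shift by $k$: $(\mathcal{S}_kq)_i=q_{i+k}$ applied to all four components. $s(x)=\frac{(\omega-1)^2}{4(\omega+7)}$, $\omega=\sqrt{8x+1}$; $s_0=\mathrm{id}$, $s_{-1}(x)=1/s(1/x)$, $s_i=s\circ s_{i-1}$, $s_{-i}=s_{-1}\circ s_{-(i-1)}$ for $i\in\mathbb{N}_+$. *)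

From Stdlib Require Import Reals ZArith Lra ClassicalEpsilon.
Open Scope R_scope.

Record quad := Quad { qa : Z -> R; qb : Z -> R; qm : Z -> R; qn : Z -> R }.

Definition ABMN_system (q : quad) : Prop :=
  forall i : Z,
    0 <= qa q i /\ 0 <= qb q i /\
    (qa q i + qb q i) * (qm q i + qa q i)
      = qa q i * qm q (i + 1)%Z + qb q i * qm q (i - 1)%Z /\
    (qa q i + qb q i) * (qn q i + qb q i)
      = qa q i * qn q (i + 1)%Z + qb q i * qn q (i - 1)%Z /\
    (qa q i + qb q i) ^ 2 = qb q i * (qm q (i + 1)%Z - qm q (i - 1)%Z) /\
    (qa q i + qb q i) ^ 2 = qa q i * (qn q (i - 1)%Z - qn q (i + 1)%Z).

Definition positive_solution (q : quad) : Prop :=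
  ABMN_system q /\ forall i : Z, 0 < qa q i /\ 0 < qb q i.

Definition lim_plus (u : Z -> R) (l : R) : Prop :=
  Un_cv (fun k : nat => u (Z.of_nat k)) l.
Definition lim_minus (u : Z -> R) (l : R) : Prop :=
  Un_cv (fun k : nat => u (- Z.of_nat k)%Z) l.

Definition standard (q : quad) : Prop :=
  positive_solution q /\
  lim_minus (qm q) 0 /\ lim_plus (qn q) 0 /\ lim_plus (qm q) 1.

Definition central_ratio (q : quad) : R :=
  (qn q (-1)%Z - qn q 0%Z) / (qm q 0%Z - qm q (-1)%Z).

Definition zero_quad : quad :=
  Quad (fun _ => 0) (fun _ => 0) (fun _ => 0) (fun _ => 0).

(* The (unique, by the paper) standard solution with central ratio x,
   selected by Hilbert's epsilon. *)
Definition std_sol (x : R) : quad :=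
  epsilon (inhabits zero_quad)
    (fun q => standard q /\ central_ratio q = x).

Definition shift_quad (k : Z) (q : quad) : quad :=
  Quad (fun i => qa q (i + k)%Z) (fun i => qb q (i + k)%Z)
       (fun i => qm q (i + k)%Z) (fun i => qn q (i + k)%Z).

Definition s_map (x : R) : R :=
  let w := sqrt (8 * x + 1) in (w - 1) ^ 2 / (4 * (w + 7)).

Definition s_inv (x : R) : R := / s_map (/ x).

Fixpoint iter_fun (n : nat) (f : R -> R) (x : R) : R :=
  match n with O => x | S n' => f (iter_fun n' f x) end.

Definition s_Z (k : Z) (x : R) : R :=
  match k with
  | Z0 => x
  | Zpos p => iter_fun (Pos.to_nat p) s_map x
  | Zneg p => iter_fun (Pos.to_nat p) s_inv x
  end.

From Stdlib Require Import Reals ZArith.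
Open Scope R_scope.
From Stdlib Require Import Lra Psatz FunctionalExtensionality ClassicalEpsilon.
From Coquelicot Require Import Coquelicot.

(* For a positive solution put t_i = b_i / a_i.  The ABMN equations are equivalent to
   m_(i+1) - m_i = 2a_i + b_i, m_i - m_(i-1) = a_i^2/b_i, n_(i-1) - n_i = a_i + 2b_i and
   n_i - n_(i+1) = b_i^2/a_i.  Hence the central ratio of the i-th shift is t_i (1 + 2t_i),
   and t_(i+1) (1 + 2t_(i+1)) = t_i^2 / (t_i + 2), which says that the central ratio of the
   shift by i+1 is s of the central ratio of the shift by i.  So S_k maps a standard solution
   with central ratio x to a standard solution with central ratio s_k(x), and it remains to
   see that standard solutions exist and are determined by their central ratio.
   Uniqueness: the central ratio fixes every t_i, so two solutions differ by a common scaling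
   of a, b, m, n and a translation of m, n; the limits at +-oo force both to be trivial.
   Existence: take any positive t with the above recursion and a with
   a_(i+1) = a_i (2 + t_i) t_(i+1).  Then t_i decays geometrically as i -> +oo and grows
   geometrically as i -> -oo, so dm_i = a_i (2 + t_i) and dn_i = t_i^2 a_i are summable, and
   m_i = sum_(j<i) dm_j, n_i = sum_(j>=i) dn_j, divided by sum_j dm_j, is the solution. *)

(* In terms of t = b_i / a_i, [cratio t] is the central ratio of the shift by i and
   [cratio_next t] that of the shift by i+1; thus s = cratio_next o cratio^-1. *)
Definition cratio (t : R) : R := t * (1 + 2 * t).
Definition cratio_next (t : R) : R := t ^ 2 / (t + 2).
Definition cratio_inv (y : R) : R := (sqrt (8 * y + 1) - 1) / 4.
Definition cratio_next_inv (y : R) : R := (y + sqrt (y ^ 2 + 8 * y)) / 2.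

Lemma cratio_pos t : 0 < t -> 0 < cratio t.
Proof. unfold cratio; nra. Qed.

Lemma cratio_next_pos t : 0 < t -> 0 < cratio_next t.
Proof. intro Ht; unfold cratio_next; apply Rdiv_lt_0_compat; nra. Qed.

Lemma cratio_inv_pos y : 0 < y -> 0 < cratio_inv y.
Proof.
  intro Hy; unfold cratio_inv.
  enough (1 < sqrt (8 * y + 1)) by lra.
  rewrite <- sqrt_1 at 1; apply sqrt_lt_1_alt; lra.
Qed.

Lemma cratio_cratio_inv y : 0 <= y -> cratio (cratio_inv y) = y.
Proof.
  intro Hy; unfold cratio, cratio_inv.
  pose proof (sqrt_sqrt (8 * y + 1) ltac:(lra)); nra.
Qed.

Lemma cratio_inv_cratio t : 0 < t -> cratio_inv (cratio t) = t.
Proof.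
  intro Ht; unfold cratio, cratio_inv.
  replace (8 * (t * (1 + 2 * t)) + 1) with ((4 * t + 1) * (4 * t + 1)) by ring.
  rewrite sqrt_square by lra; field.
Qed.

Lemma cratio_next_inv_pos y : 0 < y -> 0 < cratio_next_inv y.
Proof.
  intro Hy; unfold cratio_next_inv.
  pose proof (sqrt_pos (y ^ 2 + 8 * y)); lra.
Qed.

Lemma cratio_next_cratio_next_inv y : 0 < y -> cratio_next (cratio_next_inv y) = y.
Proof.
  intro Hy; pose proof (cratio_next_inv_pos y Hy) as Hp.
  unfold cratio_next, cratio_next_inv in *.
  pose proof (sqrt_sqrt (y ^ 2 + 8 * y) ltac:(nra)).
  set (w := sqrt (y ^ 2 + 8 * y)) in *.
  apply (Rmult_eq_reg_r ((y + w) / 2 + 2)); [|lra].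
  field_simplify; [nra | lra].
Qed.

Lemma cratio_next_inv_cratio_next t : 0 < t -> cratio_next_inv (cratio_next t) = t.
Proof.
  intro Ht; unfold cratio_next, cratio_next_inv.
  replace ((t ^ 2 / (t + 2)) ^ 2 + 8 * (t ^ 2 / (t + 2)))
    with ((t * (t + 4) / (t + 2)) * (t * (t + 4) / (t + 2))) by (field; lra).
  rewrite sqrt_square by (apply Rmult_le_pos; [nra | apply Rlt_le, Rinv_0_lt_compat; lra]).
  field; lra.
Qed.

Lemma s_map_cratio t : 0 < t -> s_map (cratio t) = cratio_next t.
Proof.
  intro Ht; unfold s_map, cratio, cratio_next.
  replace (8 * (t * (1 + 2 * t)) + 1) with ((4 * t + 1) * (4 * t + 1)) by ring.
  rewrite sqrt_square by lra; field; lra.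
Qed.

Lemma s_inv_cratio_next u : 0 < u -> s_inv (cratio_next u) = cratio u.
Proof.
  intro Hu; unfold s_inv, s_map, cratio, cratio_next.
  replace (8 * / (u ^ 2 / (u + 2)) + 1) with (((u + 4) / u) * ((u + 4) / u)) by (field; lra).
  rewrite sqrt_square by (apply Rlt_le, Rdiv_lt_0_compat; lra).
  field; repeat split; nra.
Qed.

Lemma s_map_eq y : 0 < y -> s_map y = cratio_next (cratio_inv y).
Proof.
  intro Hy; rewrite <- (cratio_cratio_inv y) at 1 by lra.
  apply s_map_cratio, cratio_inv_pos, Hy.
Qed.

Lemma s_inv_eq y : 0 < y -> s_inv y = cratio (cratio_next_inv y).
Proof.
  intro Hy; rewrite <- (cratio_next_cratio_next_inv y) at 1 by lra.
  apply s_inv_cratio_next, cratio_next_inv_pos, Hy.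
Qed.

Lemma s_map_pos y : 0 < y -> 0 < s_map y.
Proof. intro Hy; rewrite s_map_eq by lra; apply cratio_next_pos, cratio_inv_pos, Hy. Qed.

Lemma s_inv_pos y : 0 < y -> 0 < s_inv y.
Proof. intro Hy; rewrite s_inv_eq by lra; apply cratio_pos, cratio_next_inv_pos, Hy. Qed.

Lemma s_map_s_inv y : 0 < y -> s_map (s_inv y) = y.
Proof.
  intro Hy; rewrite s_inv_eq, s_map_cratio by (try apply cratio_next_inv_pos; lra).
  apply cratio_next_cratio_next_inv, Hy.
Qed.

Lemma s_inv_s_map y : 0 < y -> s_inv (s_map y) = y.
Proof.
  intro Hy; rewrite s_map_eq, s_inv_cratio_next by (try apply cratio_inv_pos; lra).
  apply cratio_cratio_inv; lra.
Qed.

Definition zorbit {X : Type} (f g : X -> X) (x : X) (i : Z) : X :=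
  if (0 <=? i)%Z then Nat.iter (Z.to_nat i) f x else Nat.iter (Z.to_nat (- i)) g x.

Section ZOrbit.
Variables (X : Type) (P : X -> Prop) (f g : X -> X) (x : X).
Hypotheses (Px : P x) (Pf : forall y, P y -> P (f y)) (Pg : forall y, P y -> P (g y)).
Hypotheses (fg : forall y, P y -> f (g y) = y) (gf : forall y, P y -> g (f y) = y).

Lemma iter_invariant (h : X -> X) : (forall y, P y -> P (h y)) -> forall n, P (Nat.iter n h x).
Proof. intros Ph n; induction n; simpl; auto. Qed.

Lemma zorbit_invariant i : P (zorbit f g x i).
Proof. unfold zorbit; destruct (0 <=? i)%Z; apply iter_invariant; assumption. Qed.

Lemma zorbit_succ i : zorbit f g x (i + 1) = f (zorbit f g x i).
Proof.
  unfold zorbit; destruct (Z.leb_spec 0 i) as [Hi | Hi].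
  - rewrite (proj2 (Z.leb_le 0 (i + 1))) by lia.
    now replace (Z.to_nat (i + 1)) with (S (Z.to_nat i)) by lia.
  - replace (Z.to_nat (- i)) with (S (Z.to_nat (- (i + 1)))) by lia; simpl.
    rewrite fg by (apply iter_invariant, Pg).
    destruct (Z.leb_spec 0 (i + 1)); [|reflexivity].
    replace (Z.to_nat (i + 1)) with 0%nat by lia.
    now replace (Z.to_nat (- (i + 1))) with 0%nat by lia.
Qed.

Lemma zorbit_pred i : zorbit f g x (i - 1) = g (zorbit f g x i).
Proof.
  replace i with (i - 1 + 1)%Z at 2 by ring.
  rewrite zorbit_succ, gf; [reflexivity | apply zorbit_invariant].
Qed.

Lemma zorbit_unique (h : Z -> X) : h 0%Z = x -> (forall i, P (h i)) ->
  (forall i, h (i + 1)%Z = f (h i)) -> forall i, h i = zorbit f g x i.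
Proof.
  intros H0 HP Hs; apply Z.peano_ind.
  - exact H0.
  - intros i IH; rewrite <- Z.add_1_r, Hs, zorbit_succ, IH; reflexivity.
  - intros i IH; rewrite <- Z.sub_1_r, zorbit_pred, <- IH, <- (gf (h (i - 1)%Z)) by apply HP.
    rewrite <- Hs; f_equal; f_equal; ring.
Qed.

End ZOrbit.

Lemma s_Z_zorbit k x : s_Z k x = zorbit s_map s_inv x k.
Proof.
  assert (Hit : forall f n, iter_fun n f x = Nat.iter n f x)
    by (intros f n; induction n; simpl; congruence).
  unfold zorbit; destruct k as [|p|p]; simpl; [reflexivity | |]; rewrite Hit; f_equal; lia.
Qed.

Lemma abmn_local_iff (a b m0 m m1 n0 n n1 : R) : 0 < a -> 0 < b ->
  ((a + b) * (m + a) = a * m1 + b * m0 /\ (a + b) * (n + b) = a * n1 + b * n0 /\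
   (a + b) ^ 2 = b * (m1 - m0) /\ (a + b) ^ 2 = a * (n0 - n1)) <->
  (m1 - m = 2 * a + b /\ m - m0 = a ^ 2 / b /\ n0 - n = a + 2 * b /\ n - n1 = b ^ 2 / a).
Proof.
  intros Ha Hb; split.
  - intros (H1 & H2 & H3 & H4).
    assert (E1 : m1 - m = 2 * a + b) by (apply (Rmult_eq_reg_l (a + b)); [nra | lra]).
    assert (E3 : n0 - n = a + 2 * b) by (apply (Rmult_eq_reg_l (a + b)); [nra | lra]).
    repeat split; [exact E1 | | exact E3 |].
    + apply (Rmult_eq_reg_l b); [field_simplify; nra | lra].
    + apply (Rmult_eq_reg_l a); [field_simplify; nra | lra].
  - intros (E1 & E2 & E3 & E4).
    replace m1 with (m + 2 * a + b) by lra; replace m0 with (m - a ^ 2 / b) by lra.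
    replace n0 with (n + a + 2 * b) by lra; replace n1 with (n - b ^ 2 / a) by lra.
    repeat split; field; lra.
Qed.

Lemma positive_solution_diff q : positive_solution q -> forall i,
  qm q (i + 1)%Z - qm q i = 2 * qa q i + qb q i /\
  qm q i - qm q (i - 1)%Z = qa q i ^ 2 / qb q i /\
  qn q (i - 1)%Z - qn q i = qa q i + 2 * qb q i /\
  qn q i - qn q (i + 1)%Z = qb q i ^ 2 / qa q i.
Proof.
  intros [Hs Hp] i; destruct (Hp i) as [Ha Hb]; destruct (Hs i) as (_ & _ & H).
  apply abmn_local_iff; assumption.
Qed.

Definition ba_ratio (q : quad) (i : Z) : R := qb q i / qa q i.

Lemma ba_ratio_pos q : positive_solution q -> forall i, 0 < ba_ratio q i.
Proof. intros [_ Hp] i; destruct (Hp i); apply Rdiv_lt_0_compat; assumption. Qed.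

Lemma central_ratio_shift q : positive_solution q -> forall i,
  central_ratio (shift_quad i q) = cratio (ba_ratio q i).
Proof.
  intros Hq i; destruct (proj2 Hq i) as [Ha Hb].
  destruct (positive_solution_diff q Hq i) as (_ & Em & En & _).
  unfold central_ratio, shift_quad, cratio, ba_ratio; cbn [qm qn].
  replace (-1 + i)%Z with (i - 1)%Z by ring; replace (0 + i)%Z with i by ring.
  rewrite Em, En; field; lra.
Qed.

Lemma positive_solution_step q : positive_solution q -> forall i,
  cratio (ba_ratio q (i + 1)) = cratio_next (ba_ratio q i) /\
  qa q (i + 1)%Z = qa q i * (2 + ba_ratio q i) * ba_ratio q (i + 1).
Proof.
  intros Hq i; destruct (proj2 Hq i) as [Ha Hb]; destruct (proj2 Hq (i + 1)%Z) as [Ha' Hb'].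
  destruct (positive_solution_diff q Hq i) as (E1 & _ & _ & E4).
  destruct (positive_solution_diff q Hq (i + 1)) as (_ & E2 & E3 & _).
  replace (i + 1 - 1)%Z with i in E2, E3 by ring.
  assert (K : qa q (i + 1)%Z ^ 2 = qb q (i + 1)%Z * (2 * qa q i + qb q i))
    by (rewrite <- E1, E2; field; lra).
  unfold cratio, cratio_next, ba_ratio.
  split.
  - apply (Rmult_eq_reg_r (qa q (i + 1)%Z ^ 2)); [|nra].
    replace (qb q (i + 1)%Z / qa q (i + 1)%Z * (1 + 2 * (qb q (i + 1)%Z / qa q (i + 1)%Z))
             * qa q (i + 1)%Z ^ 2)
      with (qb q (i + 1)%Z * (qa q (i + 1)%Z + 2 * qb q (i + 1)%Z)) by (field; lra).
    rewrite K; replace (qa q (i + 1)%Z + 2 * qb q (i + 1)%Z) with (qb q i ^ 2 / qa q i) by lra.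
    field; lra.
  - apply (Rmult_eq_reg_l (qa q (i + 1)%Z)); [|lra].
    replace (qa q (i + 1)%Z * qa q (i + 1)%Z) with (qa q (i + 1)%Z ^ 2) by ring.
    rewrite K; field; lra.
Qed.

Lemma central_ratio_shift_s_Z q : positive_solution q -> forall k,
  central_ratio (shift_quad k q) = s_Z k (central_ratio q).
Proof.
  intros Hq k.
  assert (H0 : central_ratio (shift_quad 0 q) = central_ratio q)
    by (unfold central_ratio, shift_quad; cbn [qm qn]; now rewrite !Z.add_0_r).
  assert (Hpos : forall i, 0 < central_ratio (shift_quad i q))
    by (intro i; rewrite central_ratio_shift by exact Hq; apply cratio_pos, ba_ratio_pos, Hq).
  rewrite s_Z_zorbit; revert k.
  apply (zorbit_unique R (fun y => 0 < y) s_map s_inv _ (eq_ind _ _ (Hpos 0%Z) _ H0)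
           s_map_pos s_inv_pos s_map_s_inv s_inv_s_map); [exact H0 | exact Hpos |].
  intro i; rewrite !central_ratio_shift, s_map_cratio by (try apply ba_ratio_pos; exact Hq).
  apply positive_solution_step, Hq.
Qed.

Lemma lim_plus_shift u l k : lim_plus u l -> lim_plus (fun i => u (i + k)%Z) l.
Proof.
  intros H eps He; destruct (H eps He) as [N HN].
  exists (N + Z.to_nat (Z.abs k))%nat; intros n Hn.
  replace (Z.of_nat n + k)%Z with (Z.of_nat (Z.to_nat (Z.of_nat n + k))) by lia.
  apply HN; lia.
Qed.

Lemma lim_minus_shift u l k : lim_minus u l -> lim_minus (fun i => u (i + k)%Z) l.
Proof.
  intro H; apply (lim_plus_shift (fun i => u (- i)%Z) l (- k)) in H.
  intros eps He; destruct (H eps He) as [N HN]; exists N; intros n Hn.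
  replace (- Z.of_nat n + k)%Z with (- (Z.of_nat n + - k))%Z by ring; apply HN, Hn.
Qed.

Lemma standard_shift q k : standard q -> standard (shift_quad k q).
Proof.
  intros [[Hs Hp] (Lm & Ln & Lm1)]; split; [split|].
  - intro i; unfold shift_quad; cbn [qa qb qm qn].
    replace (i + 1 + k)%Z with (i + k + 1)%Z by ring.
    replace (i - 1 + k)%Z with (i + k - 1)%Z by ring.
    apply Hs.
  - intro i; apply Hp.
  - exact (conj (lim_minus_shift _ _ k Lm)
             (conj (lim_plus_shift _ _ k Ln) (lim_plus_shift _ _ k Lm1))).
Qed.

Lemma Zseq_const (f : Z -> R) : (forall i, f (i + 1)%Z = f i) -> forall i, f i = f 0%Z.
Proof.
  intro Hs; apply Z.peano_ind; [reflexivity | |].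
  - intros i IH; rewrite <- Z.add_1_r, Hs; exact IH.
  - intros i IH; rewrite <- IH, <- (Hs (Z.pred i)); f_equal; lia.
Qed.

Lemma Un_cv_const c : Un_cv (fun _ => c) c.
Proof. apply is_lim_seq_Reals, is_lim_seq_const. Qed.

Lemma Un_cv_div_const (x : nat -> R) l k : Un_cv x l -> Un_cv (fun n => x n / k) (l / k).
Proof. intro H; apply (CV_mult _ (fun _ => / k)); [exact H | apply Un_cv_const]. Qed.

Lemma Un_cv_const_eq (u : nat -> R) c l : (forall n, u n = c) -> Un_cv u l -> c = l.
Proof.
  intros Hc Hl; apply (UL_sequence u); [|exact Hl].
  apply (Un_cv_ext (fun _ => c)); [easy | apply Un_cv_const].
Qed.

Lemma Un_cv_sub_scal (u v : nat -> R) lam lu lv : Un_cv u lu -> Un_cv v lv ->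
  Un_cv (fun n => v n - lam * u n) (lv - lam * lu).
Proof.
  intros Hu Hv; apply CV_minus; [exact Hv |].
  apply (CV_mult (fun _ => lam)); [apply Un_cv_const | exact Hu].
Qed.

Lemma positive_solution_ba_ratio_eq q1 q2 :
  positive_solution q1 -> positive_solution q2 -> central_ratio q1 = central_ratio q2 ->
  forall i, ba_ratio q1 i = ba_ratio q2 i.
Proof.
  intros H1 H2 Hc i.
  rewrite <- (cratio_inv_cratio (ba_ratio q1 i)), <- (cratio_inv_cratio (ba_ratio q2 i))
    by apply ba_ratio_pos, H2 || apply ba_ratio_pos, H1.
  rewrite <- !central_ratio_shift, !central_ratio_shift_s_Z, Hc by assumption.
  reflexivity.
Qed.

Lemma positive_solution_affine q1 q2 :
  positive_solution q1 -> positive_solution q2 -> central_ratio q1 = central_ratio q2 ->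
  exists lam, forall i,
    qa q2 i = lam * qa q1 i /\ qb q2 i = lam * qb q1 i /\
    qm q2 i - lam * qm q1 i = qm q2 0%Z - lam * qm q1 0%Z /\
    qn q2 i - lam * qn q1 i = qn q2 0%Z - lam * qn q1 0%Z.
Proof.
  intros H1 H2 Hc.
  pose proof (positive_solution_ba_ratio_eq q1 q2 H1 H2 Hc) as Ht.
  pose proof (proj2 H1) as P1; pose proof (proj2 H2) as P2.
  set (lam := qa q2 0%Z / qa q1 0%Z).
  assert (Hlam : 0 < lam) by (destruct (P1 0%Z), (P2 0%Z); apply Rdiv_lt_0_compat; lra).
  exists lam.
  assert (Ha : forall i, qa q2 i = lam * qa q1 i).
  { assert (Hstep : forall j, qa q2 (j + 1)%Z / qa q1 (j + 1)%Z = qa q2 j / qa q1 j).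
    { intro j; destruct (P1 j), (P2 j).
      pose proof (ba_ratio_pos q1 H1 j); pose proof (ba_ratio_pos q1 H1 (j + 1)).
      rewrite (proj2 (positive_solution_step q1 H1 j)), (proj2 (positive_solution_step q2 H2 j)).
      rewrite <- !Ht; field; repeat split; nra. }
    intro i; unfold lam; rewrite <- (Zseq_const (fun j => qa q2 j / qa q1 j) Hstep i).
    destruct (P1 i); field; lra. }
  assert (Hb : forall i, qb q2 i = lam * qb q1 i).
  { intro i; specialize (Ht i); unfold ba_ratio in Ht; destruct (P1 i), (P2 i).
    replace (qb q2 i) with (qa q2 i * (qb q2 i / qa q2 i)) by (field; lra).
    rewrite <- Ht, (Ha i); field; lra. }
  intro i; repeat split; [apply Ha | apply Hb | |].
  - apply (Zseq_const (fun j => qm q2 j - lam * qm q1 j)); intro j.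
    destruct (positive_solution_diff q1 H1 j) as (E1 & _).
    destruct (positive_solution_diff q2 H2 j) as (E2 & _).
    rewrite Ha, Hb in E2; nra.
  - apply (Zseq_const (fun j => qn q2 j - lam * qn q1 j)); intro j.
    destruct (positive_solution_diff q1 H1 j) as (_ & _ & _ & E1).
    destruct (positive_solution_diff q2 H2 j) as (_ & _ & _ & E2).
    destruct (P1 j); rewrite Ha, Hb in E2.
    replace ((lam * qb q1 j) ^ 2 / (lam * qa q1 j)) with (lam * (qb q1 j ^ 2 / qa q1 j)) in E2
      by (field; lra).
    rewrite <- E1 in E2; nra.
Qed.

Lemma standard_unique q1 q2 : standard q1 -> standard q2 ->
  central_ratio q1 = central_ratio q2 -> q1 = q2.
Proof.
  intros [H1 (Lm1 & Ln1 & Lp1)] [H2 (Lm2 & Ln2 & Lp2)] Hc.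
  destruct (positive_solution_affine q1 q2 H1 H2 Hc) as [lam Haff].
  assert (Dm0 : qm q2 0%Z - lam * qm q1 0%Z = 0 - lam * 0).
  { apply (Un_cv_const_eq (fun n => qm q2 (- Z.of_nat n)%Z - lam * qm q1 (- Z.of_nat n)%Z));
      [intro n; apply Haff | apply Un_cv_sub_scal; assumption]. }
  assert (Dm1 : qm q2 0%Z - lam * qm q1 0%Z = 1 - lam * 1).
  { apply (Un_cv_const_eq (fun n => qm q2 (Z.of_nat n) - lam * qm q1 (Z.of_nat n)));
      [intro n; apply Haff | apply Un_cv_sub_scal; assumption]. }
  assert (Dn : qn q2 0%Z - lam * qn q1 0%Z = 0 - lam * 0).
  { apply (Un_cv_const_eq (fun n => qn q2 (Z.of_nat n) - lam * qn q1 (Z.of_nat n)));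
      [intro n; apply Haff | apply Un_cv_sub_scal; assumption]. }
  assert (Hlam : lam = 1) by lra; subst lam.
  destruct q1 as [a1 b1 m1 n1], q2 as [a2 b2 m2 n2]; cbn in *.
  f_equal; apply functional_extensionality; intro i; destruct (Haff i) as (Ea & Eb & Em & En);
    lra.
Qed.

Lemma ex_series_geom_ratio (x : nat -> R) K r : (forall n, 0 < x n) -> 0 <= r < 1 ->
  (forall n, x (S n) <= K * r ^ n * x n) -> ex_series x.
Proof.
  intros Hp Hr Hb.
  apply (ex_series_ext (fun n => Rabs (x n))); [intro n; apply Rabs_pos_eq, Rlt_le, Hp |].
  apply (ex_series_DAlembert x 0); [lra | intro n; apply Rgt_not_eq, Hp |].
  apply (is_lim_seq_le_le (fun _ => 0) _ (fun n => K * r ^ n)).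
  - intro n; pose proof (Hp n); pose proof (Hp (S n)).
    rewrite Rabs_pos_eq by (apply Rlt_le, Rdiv_lt_0_compat; lra).
    split; [apply Rlt_le, Rdiv_lt_0_compat; lra |].
    apply (Rmult_le_reg_r (x n)); [lra |].
    unfold Rdiv; rewrite Rmult_assoc, Rinv_l by lra; rewrite Rmult_1_r; apply Hb.
  - apply is_lim_seq_const.
  - replace (Finite 0) with (Rbar_mult K 0) by (simpl; f_equal; ring).
    apply is_lim_seq_scal_l, is_lim_seq_geom; rewrite Rabs_pos_eq; lra.
Qed.

Lemma Series_nonneg (x : nat -> R) : (forall n, 0 <= x n) -> ex_series x -> 0 <= Series x.
Proof.
  intros Hx H; pose proof (Series_le (fun _ => 0) x) as L.
  rewrite (Series_ext (fun _ => 0) (fun _ => 0 * 0)), Series_scal_l, Rmult_0_l in L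
    by (intro; ring).
  apply L; [intro n; split; [lra | apply Hx] | exact H].
Qed.

Definition tail_sum (f : Z -> R) (i : Z) : R := Series (fun k => f (i + Z.of_nat k)%Z).

(* [head_sum f i] is the sum of the [f j] for [j < i]. *)
Definition head_sum (f : Z -> R) (i : Z) : R := tail_sum (fun j => f (- j)%Z) (1 - i).

Section TailSums.
Variable f : Z -> R.
Hypothesis Hf : ex_series (fun n => f (Z.of_nat n)).

Lemma ex_series_tail i : ex_series (fun k => f (i + Z.of_nat k)%Z).
Proof.
  apply (ex_series_incr_n _ (Z.to_nat (- i))).
  apply (ex_series_ext (fun k => f (Z.of_nat (Z.to_nat (i + Z.of_nat (Z.to_nat (- i))) + k)))).
  - intro k; f_equal; lia.
  - exact (proj1 (ex_series_incr_n _ _) Hf).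
Qed.

Lemma tail_sum_succ i : tail_sum f i = f i + tail_sum f (i + 1).
Proof.
  unfold tail_sum; rewrite Series_incr_1 by apply ex_series_tail.
  rewrite Z.add_0_r; f_equal; apply Series_ext; intro k; f_equal; lia.
Qed.

Lemma tail_sum_nonneg : (forall i, 0 <= f i) -> forall i, 0 <= tail_sum f i.
Proof. intros Hp i; apply Series_nonneg; [intro; apply Hp | apply ex_series_tail]. Qed.

Lemma tail_sum_lim : lim_plus (tail_sum f) 0.
Proof.
  apply is_lim_seq_Reals, is_lim_seq_incr_1.
  apply (is_lim_seq_ext
           (fun n => Series (fun k => f (Z.of_nat k)) - sum_f_R0 (fun k => f (Z.of_nat k)) n)).
  { intro n; rewrite (Series_incr_n _ (S n)) by (lia || exact Hf).
    unfold tail_sum; simpl pred; ring_simplify.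
    apply Series_ext; intro k; f_equal; lia. }
  replace 0 with (Series (fun k => f (Z.of_nat k)) - Series (fun k => f (Z.of_nat k))) by ring.
  apply is_lim_seq_minus'; [apply is_lim_seq_const |].
  apply is_lim_seq_Reals, is_series_Reals, Series_correct, Hf.
Qed.

End TailSums.

Section HeadSums.
Variable f : Z -> R.
Hypothesis Hf : ex_series (fun n => f (- Z.of_nat n)%Z).

Lemma head_sum_succ i : head_sum f (i + 1) = f i + head_sum f i.
Proof.
  unfold head_sum; rewrite (tail_sum_succ _ Hf (1 - (i + 1))).
  f_equal; f_equal; ring.
Qed.

Lemma head_sum_nonneg : (forall i, 0 <= f i) -> forall i, 0 <= head_sum f i.
Proof. intros Hp i; apply tail_sum_nonneg; [exact Hf | intro; apply Hp]. Qed.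

Lemma head_sum_lim : lim_minus (head_sum f) 0.
Proof.
  pose proof (lim_plus_shift _ _ 1 (tail_sum_lim (fun j => f (- j)%Z) Hf)) as H.
  intros eps He; destruct (H eps He) as [N HN]; exists N; intros n Hn.
  unfold head_sum; replace (1 - - Z.of_nat n)%Z with (Z.of_nat n + 1)%Z by ring; apply HN, Hn.
Qed.

End HeadSums.

Section StandardFromRatios.
Variables t a : Z -> R.
Hypotheses (t_pos : forall i, 0 < t i) (a_pos : forall i, 0 < a i).
Hypothesis t_step : forall i, cratio (t (i + 1)%Z) = cratio_next (t i).
Hypothesis a_step : forall i, a (i + 1)%Z = a i * (2 + t i) * t (i + 1)%Z.

Let dm (i : Z) : R := a i * (2 + t i).
Let dn (i : Z) : R := t i ^ 2 * a i.
Let b (i : Z) : R := t i * a i.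

Lemma dm_pos i : 0 < dm i.
Proof. pose proof (t_pos i); pose proof (a_pos i); unfold dm; nra. Qed.

Lemma t_succ_le i : t (i + 1)%Z <= t i * (t i / (t i + 2)).
Proof.
  pose proof (t_pos i); pose proof (t_pos (i + 1)%Z); pose proof (t_step i).
  unfold cratio, cratio_next in *.
  replace (t i * (t i / (t i + 2))) with (t i ^ 2 / (t i + 2)) by (field; lra); nra.
Qed.

Lemma cratio_le_t_pred i : cratio (t i) <= t (i - 1)%Z.
Proof.
  pose proof (t_pos (i - 1)%Z); pose proof (t_step (i - 1)) as E.
  replace (i - 1 + 1)%Z with i in E by ring; rewrite E; unfold cratio_next.
  apply (Rmult_le_reg_r (t (i - 1)%Z + 2)); [lra |].
  unfold Rdiv; rewrite Rmult_assoc, Rinv_l by lra; nra.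
Qed.

Lemma dm_mul_t_succ i : dm i * t (i + 1)%Z = a (i + 1)%Z.
Proof. unfold dm; rewrite a_step; ring. Qed.

Lemma dn_eq i : dn i = a (i + 1)%Z + 2 * b (i + 1)%Z.
Proof.
  pose proof (t_pos i); unfold dn, b.
  transitivity (a i * (2 + t i) * cratio_next (t i)); [unfold cratio_next; field; lra |].
  rewrite <- t_step, a_step; unfold cratio; ring.
Qed.

Let rate : R := t 0%Z / (t 0%Z + 2).
Let growth : R := 1 + 2 * t 0%Z.

Lemma rate_range : 0 <= rate < 1.
Proof.
  pose proof (t_pos 0%Z); unfold rate; split; [apply Rlt_le, Rdiv_lt_0_compat; lra |].
  apply (Rmult_lt_reg_r (t 0%Z + 2)); [lra |].
  unfold Rdiv; rewrite Rmult_assoc, Rinv_l by lra; lra.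
Qed.

Lemma t_fwd_geom n : t (Z.of_nat n) <= t 0%Z * rate ^ n.
Proof.
  pose proof (t_pos 0%Z); pose proof rate_range.
  induction n as [|n IH]; [simpl; lra |].
  rewrite Nat2Z.inj_succ, <- Z.add_1_r; pose proof (t_succ_le (Z.of_nat n)) as Hs.
  pose proof (t_pos (Z.of_nat n)); set (tn := t (Z.of_nat n)) in *.
  assert (Hcn : rate ^ n <= 1) by (rewrite <- (pow1 n); apply pow_incr; lra).
  assert (Hr : tn / (tn + 2) <= rate).
  { unfold rate; apply (Rmult_le_reg_r ((tn + 2) * (t 0%Z + 2))); [nra |].
    replace (tn / (tn + 2) * ((tn + 2) * (t 0%Z + 2))) with (tn * (t 0%Z + 2)) by (field; lra).
    replace (t 0%Z / (t 0%Z + 2) * ((tn + 2) * (t 0%Z + 2))) with (t 0%Z * (tn + 2))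
      by (field; lra).
    nra. }
  simpl pow; rewrite (Rmult_comm rate), <- Rmult_assoc.
  apply (Rle_trans _ _ _ Hs), Rmult_le_compat; try lra.
  apply Rlt_le, Rdiv_lt_0_compat; lra.
Qed.

Lemma t_fwd_le n : t (Z.of_nat n) <= t 0%Z.
Proof.
  pose proof (t_fwd_geom n); pose proof (t_pos 0%Z); pose proof rate_range.
  assert (rate ^ n <= 1) by (rewrite <- (pow1 n); apply pow_incr; lra).
  nra.
Qed.

Lemma t_bwd_geom n : t 0%Z * growth ^ n <= t (- Z.of_nat n)%Z.
Proof.
  pose proof (t_pos 0%Z).
  induction n as [|n IH]; [simpl; lra |].
  replace (- Z.of_nat (S n))%Z with (- Z.of_nat n - 1)%Z by lia.
  pose proof (cratio_le_t_pred (- Z.of_nat n)) as Hs; unfold cratio in Hs.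
  pose proof (t_pos (- Z.of_nat n)%Z); set (tn := t (- Z.of_nat n)%Z) in *.
  assert (Hdn : 1 <= growth ^ n) by (apply pow_R1_Rle; unfold growth; lra).
  simpl pow; rewrite (Rmult_comm growth), <- Rmult_assoc.
  apply (fun H => Rle_trans _ _ _ H Hs), Rmult_le_compat; unfold growth in *; nra.
Qed.

Lemma ex_series_dm_fwd : ex_series (fun n => dm (Z.of_nat n)).
Proof.
  apply (ex_series_geom_ratio _ (t 0%Z * (2 + t 0%Z) * rate) rate);
    [intro; apply dm_pos | exact rate_range |].
  intro n; rewrite Nat2Z.inj_succ, <- Z.add_1_r.
  pose proof (t_fwd_geom (S n)) as Hg; pose proof (t_fwd_le (S n)) as Hle.
  rewrite Nat2Z.inj_succ, <- Z.add_1_r in Hg, Hle; simpl pow in Hg.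
  pose proof (dm_pos (Z.of_nat n)); pose proof (t_pos (Z.of_nat n + 1)).
  replace (dm (Z.of_nat n + 1))
    with (t (Z.of_nat n + 1) * (2 + t (Z.of_nat n + 1)) * dm (Z.of_nat n))
    by (unfold dm; rewrite a_step; ring).
  apply Rmult_le_compat_r; [lra |].
  replace (t 0%Z * (2 + t 0%Z) * rate * rate ^ n) with (t 0%Z * (rate * rate ^ n) * (2 + t 0%Z))
    by ring.
  apply Rmult_le_compat; lra.
Qed.

Lemma ex_series_dm_bwd : ex_series (fun n => dm (- Z.of_nat n)%Z).
Proof.
  pose proof (t_pos 0%Z) as H0.
  assert (Hd : 1 < growth) by (unfold growth; lra).
  apply (ex_series_geom_ratio _ (/ (2 * t 0%Z)) (/ growth)); [intro; apply dm_pos | |].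
  { split; [apply Rlt_le, Rinv_0_lt_compat; lra |].
    rewrite <- Rinv_1; apply Rinv_lt_contravar; lra. }
  intro n; replace (- Z.of_nat (S n))%Z with (- Z.of_nat n - 1)%Z by lia.
  pose proof (dm_mul_t_succ (- Z.of_nat n - 1)) as E.
  replace (- Z.of_nat n - 1 + 1)%Z with (- Z.of_nat n)%Z in E by ring.
  pose proof (t_bwd_geom n); pose proof (t_pos (- Z.of_nat n)%Z).
  pose proof (a_pos (- Z.of_nat n)%Z).
  assert (Hdn : 0 < growth ^ n) by (apply pow_lt; lra).
  set (tn := t (- Z.of_nat n)%Z) in *.
  assert (Hdm : dm (- Z.of_nat n - 1)%Z = dm (- Z.of_nat n)%Z * / (tn * (2 + tn))).
  { change (dm (- Z.of_nat n)%Z) with (a (- Z.of_nat n)%Z * (2 + tn)).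
    rewrite <- E; field; lra. }
  rewrite Hdm, pow_inv, <- Rinv_mult, (Rmult_comm _ (dm _)).
  apply Rmult_le_compat_l; [apply Rlt_le, dm_pos |].
  apply Rinv_le_contravar; nra.
Qed.

Lemma ex_series_dn_fwd : ex_series (fun n => dn (Z.of_nat n)).
Proof.
  apply (@ex_series_le R_AbsRing R_CompleteNormedModule _ (fun n => t 0%Z * dm (Z.of_nat n)));
    [| exact (ex_series_scal_l (t 0%Z) _ ex_series_dm_fwd)].
  intro n; change (norm (dn (Z.of_nat n))) with (Rabs (dn (Z.of_nat n))).
  pose proof (t_fwd_le n); pose proof (t_pos (Z.of_nat n)); pose proof (a_pos (Z.of_nat n)).
  unfold dn, dm; rewrite Rabs_pos_eq by nra.
  set (tn := t (Z.of_nat n)) in *; set (an := a (Z.of_nat n)) in *.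
  assert (tn ^ 2 <= tn * (2 + tn)) by nra.
  assert (tn * (an * (2 + tn)) <= t 0%Z * (an * (2 + tn))) by (apply Rmult_le_compat_r; nra).
  nra.
Qed.

Let dm_total : R := head_sum dm 0 + tail_sum dm 0.

Lemma head_add_tail_sum_dm i : head_sum dm i + tail_sum dm i = dm_total.
Proof.
  apply (Zseq_const (fun j => head_sum dm j + tail_sum dm j)); intro j.
  rewrite (head_sum_succ _ ex_series_dm_bwd), (tail_sum_succ _ ex_series_dm_fwd j); ring.
Qed.

Lemma dm_total_pos : 0 < dm_total.
Proof.
  unfold dm_total; rewrite (tail_sum_succ _ ex_series_dm_fwd).
  pose proof (dm_pos 0%Z).
  pose proof (head_sum_nonneg _ ex_series_dm_bwd (fun i => Rlt_le _ _ (dm_pos i)) 0%Z).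
  pose proof (tail_sum_nonneg _ ex_series_dm_fwd (fun i => Rlt_le _ _ (dm_pos i)) (0 + 1)%Z).
  lra.
Qed.

Definition quad_of_ratios : quad :=
  Quad (fun i => a i / dm_total) (fun i => b i / dm_total)
       (fun i => head_sum dm i / dm_total) (fun i => tail_sum dn i / dm_total).

Lemma quad_of_ratios_positive : positive_solution quad_of_ratios.
Proof.
  pose proof dm_total_pos; split; intro i; unfold quad_of_ratios; cbn [qa qb qm qn];
    pose proof (a_pos i); pose proof (t_pos i);
    assert (0 < a i / dm_total) by (apply Rdiv_lt_0_compat; lra);
    assert (0 < b i / dm_total) by (unfold b; apply Rdiv_lt_0_compat; nra).
  2: split; assumption.
  do 2 (split; [lra |]); apply abmn_local_iff; try assumption.
  pose proof (head_sum_succ _ ex_series_dm_bwd (i - 1)) as Hm.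
  pose proof (dm_mul_t_succ (i - 1)) as Hdm.
  pose proof (tail_sum_succ _ ex_series_dn_fwd (i - 1)) as Hn; pose proof (dn_eq (i - 1)) as Hdn.
  replace (i - 1 + 1)%Z with i in Hm, Hdm, Hn, Hdn by ring.
  repeat split.
  - rewrite (head_sum_succ _ ex_series_dm_bwd); unfold dm, b; field; lra.
  - replace (dm (i - 1)%Z) with (a i / t i) in Hm by (rewrite <- Hdm; field; lra).
    rewrite Hm; unfold b; field; lra.
  - rewrite Hn, Hdn; field; lra.
  - rewrite (tail_sum_succ _ ex_series_dn_fwd i); unfold dn, b; field; lra.
Qed.

Lemma quad_of_ratios_standard : standard quad_of_ratios.
Proof.
  pose proof dm_total_pos; split; [exact quad_of_ratios_positive | split; [| split]];
    unfold quad_of_ratios; cbn [qm qn].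
  - replace 0 with (0 / dm_total) by (field; lra).
    apply Un_cv_div_const, (head_sum_lim _ ex_series_dm_bwd).
  - replace 0 with (0 / dm_total) by (field; lra).
    apply Un_cv_div_const, (tail_sum_lim _ ex_series_dn_fwd).
  - replace 1 with ((dm_total - 0) / dm_total) by (field; lra).
    apply (Un_cv_div_const (fun n => head_sum dm (Z.of_nat n))).
    replace (fun n => head_sum dm (Z.of_nat n)) with (fun n => dm_total - tail_sum dm (Z.of_nat n))
      by (apply functional_extensionality; intro n;
          rewrite <- (head_add_tail_sum_dm (Z.of_nat n)); ring).
    apply CV_minus; [apply Un_cv_const | apply (tail_sum_lim _ ex_series_dm_fwd)].
Qed.

Lemma quad_of_ratios_central_ratio : central_ratio quad_of_ratios = cratio (t 0%Z).
Proof.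
  pose proof dm_total_pos; unfold central_ratio, quad_of_ratios; cbn [qm qn].
  pose proof (tail_sum_succ _ ex_series_dn_fwd (-1)) as Hn.
  pose proof (head_sum_succ _ ex_series_dm_bwd (-1)) as Hm.
  replace (-1 + 1)%Z with 0%Z in Hn, Hm by ring.
  replace (tail_sum dn (-1) / dm_total - tail_sum dn 0 / dm_total) with (dn (-1)%Z / dm_total)
    by (rewrite Hn; field; lra).
  replace (head_sum dm 0 / dm_total - head_sum dm (-1) / dm_total) with (dm (-1)%Z / dm_total)
    by (rewrite Hm; field; lra).
  pose proof (t_pos (-1)%Z); pose proof (a_pos (-1)%Z).
  replace 0%Z with (-1 + 1)%Z by ring; rewrite t_step; unfold dm, dn, cratio_next; field; lra.
Qed.

End StandardFromRatios.

(* (t_i, a_i) |-> (t_(i+1), a_(i+1)), and back. *)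
Definition ratio_step (p : R * R) : R * R :=
  let t' := cratio_inv (cratio_next (fst p)) in (t', snd p * (2 + fst p) * t').

Definition ratio_step_inv (p : R * R) : R * R :=
  let t' := cratio_next_inv (cratio (fst p)) in (t', snd p / ((2 + t') * fst p)).

Lemma exists_ratio_sequences t0 : 0 < t0 -> exists t a : Z -> R,
  t 0%Z = t0 /\ (forall i, 0 < t i) /\ (forall i, 0 < a i) /\
  (forall i, cratio (t (i + 1)%Z) = cratio_next (t i)) /\
  (forall i, a (i + 1)%Z = a i * (2 + t i) * t (i + 1)%Z).
Proof.
  intro Ht0.
  set (P := fun p : R * R => 0 < fst p /\ 0 < snd p).
  assert (Pstep : forall p, P p -> P (ratio_step p)).
  { intros [t a] [Ht Ha]; unfold P, ratio_step in *; cbn in *.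
    pose proof (cratio_inv_pos _ (cratio_next_pos t Ht)); split; [lra |].
    apply Rmult_lt_0_compat; [apply Rmult_lt_0_compat |]; lra. }
  assert (Pstep_inv : forall p, P p -> P (ratio_step_inv p)).
  { intros [t a] [Ht Ha]; unfold P, ratio_step_inv in *; cbn in *.
    pose proof (cratio_next_inv_pos _ (cratio_pos t Ht)); split; [lra |].
    apply Rdiv_lt_0_compat; [lra | nra]. }
  assert (step_inv : forall p, P p -> ratio_step (ratio_step_inv p) = p).
  { intros [t a] [Ht Ha]; unfold P, ratio_step, ratio_step_inv in *; cbn in *.
    pose proof (cratio_next_inv_pos _ (cratio_pos t Ht)).
    rewrite cratio_next_cratio_next_inv, cratio_inv_cratio by auto using cratio_pos.
    f_equal; field; lra. }
  assert (inv_step : forall p, P p -> ratio_step_inv (ratio_step p) = p).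
  { intros [t a] [Ht Ha]; unfold P, ratio_step, ratio_step_inv in *; cbn in *.
    pose proof (cratio_inv_pos _ (cratio_next_pos t Ht)).
    pose proof (cratio_next_pos t Ht).
    rewrite cratio_cratio_inv, cratio_next_inv_cratio_next by (auto || lra).
    f_equal; field; lra. }
  set (o := zorbit ratio_step ratio_step_inv (t0, 1)).
  assert (P0 : P (t0, 1)) by (unfold P; cbn; lra).
  assert (HP : forall i, P (o i)) by (intro i; apply zorbit_invariant; assumption).
  assert (Ho : forall i, o (i + 1)%Z = ratio_step (o i))
    by (intro i; apply (zorbit_succ _ P); assumption).
  exists (fun i => fst (o i)), (fun i => snd (o i)).
  refine (conj eq_refl (conj (fun i => proj1 (HP i)) (conj (fun i => proj2 (HP i)) (conj _ _)))).
  - intro i; rewrite Ho; unfold ratio_step; cbn.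
    apply cratio_cratio_inv, Rlt_le, cratio_next_pos, HP.
  - intro i; rewrite Ho; reflexivity.
Qed.

Lemma standard_exists x : 0 < x -> exists q, standard q /\ central_ratio q = x.
Proof.
  intro hx.
  destruct (exists_ratio_sequences (cratio_inv x) (cratio_inv_pos x hx))
    as (t & a & H0 & Ht & Ha & Hts & Has).
  exists (quad_of_ratios t a); split.
  - apply quad_of_ratios_standard; assumption.
  - rewrite quad_of_ratios_central_ratio, H0 by assumption; apply cratio_cratio_inv; lra.
Qed.

Lemma std_sol_spec x : (exists q, standard q /\ central_ratio q = x) ->
  standard (std_sol x) /\ central_ratio (std_sol x) = x.
Proof. apply (epsilon_spec (inhabits zero_quad) (fun q => standard q /\ central_ratio q = x)). Qed.

Theorem mainTheorem16 (x : R) (k : Z) (hx : 0 < x) :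
  shift_quad k (std_sol x) = std_sol (s_Z k x).
Proof.
  destruct (std_sol_spec x (standard_exists x hx)) as [Hstd Hcr].
  assert (Hcr_shift : central_ratio (shift_quad k (std_sol x)) = s_Z k x)
    by (rewrite central_ratio_shift_s_Z, Hcr; [reflexivity | apply Hstd]).
  destruct (std_sol_spec (s_Z k x)) as [Hstd' Hcr'].
  { exists (shift_quad k (std_sol x)); split; [apply standard_shift, Hstd | exact Hcr_shift]. }
  apply standard_unique; [apply standard_shift, Hstd | exact Hstd' | congruence].
Qed.
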